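(* Let $G$ be a group and $s,t\in G$ with $s\neq t$. Then $\Phi(\langle s,t\rangle,\{s,t\})$ is complete bipartite (every vertex of $V_s$ is adjacent to every vertex of $V_t$) if and only if for every $x\in\langle s,t\rangle$ there exist $m,n\in\mathbb{Z}$ with $x=s^mt^n$.
   Context: For a group $K$ and $s\ne t$ in $K$, $\Phi(K,\{s,t\})$ is the multigraph with vertex set $V_s\cup V_t$, where $V_s=\{\langle s\rangle x : x\in K\}$ and $V_t=\{\langle t\rangle y: y\in K\}$ are the sets of right cosets, and with one edge labeled $g$ between $\langle s\rangle x$ and $\langle t\rangle y$ for each $g\in\langle s\rangle x\cap\langle t\rangle y$, and no other edges. *)

From Stdlib Require Import ZArith.

Record Group := {
  carrier :> Type;
  gmul : carrier -> carrier -> carrier;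
  gone : carrier;
  ginv : carrier -> carrier;
  gmulA : forall x y z, gmul x (gmul y z) = gmul (gmul x y) z;
  gmul1l : forall x, gmul gone x = x;
  gmul1r : forall x, gmul x gone = x;
  gmulVl : forall x, gmul (ginv x) x = gone;
  gmulVr : forall x, gmul x (ginv x) = gone
}.

Arguments gmul {g}.
Arguments gone {g}.
Arguments ginv {g}.

Fixpoint gpown {G : Group} (x : G) (n : nat) : G :=
  match n with
  | O => gone
  | S k => gmul x (gpown x k)
  end.

Definition gpow {G : Group} (x : G) (m : Z) : G :=
  match m with
  | Z0 => gone
  | Zpos p => gpown x (Pos.to_nat p)
  | Zneg p => ginv (gpown x (Pos.to_nat p))
  end.

Inductive gen2 {G : Group} (s t : G) : G -> Prop :=
  | gen2_s : gen2 s t s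
  | gen2_t : gen2 s t t
  | gen2_one : gen2 s t gone
  | gen2_mul : forall x y, gen2 s t x -> gen2 s t y -> gen2 s t (gmul x y)
  | gen2_inv : forall x, gen2 s t x -> gen2 s t (ginv x).

Definition rcoset {G : Group} (s x : G) : G -> Prop :=
  fun g => exists m : Z, g = gmul (gpow s m) x.

(* Phi(K,{s,t}) for a subgroup K (given as a predicate) containing s, t:
   vertices V_s = { <s>x : x in K }, V_t = { <t>y : y in K }; the edges between
   <s>x and <t>y are labelled by the elements g of <s>x ∩ <t>y. *)
Definition Phi_edge {G : Group} (K : G -> Prop) (s t x y g : G) : Prop :=
  K x /\ K y /\ rcoset s x g /\ rcoset t y g.

Definition Phi_complete_bipartite {G : Group} (K : G -> Prop) (s t : G) : Prop :=
  forall x y : G, K x -> K y -> exists g : G, Phi_edge K s t x y g.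

(* Two right cosets <s>x and <t>y meet exactly when x y^-1 lies in the product
   set <s><t>.  Hence Phi(K,{s,t}) is complete bipartite iff x y^-1 is in <s><t>
   for all x, y in K; for K = <s,t> this says K = <s><t>, taking y = 1 in one
   direction and using that x y^-1 is again in K in the other. *)
From Stdlib Require Import ZArith.

Section GroupFacts.

Variable G : Group.

Lemma ginv_unique (a b : G) : gmul a b = gone -> ginv a = b.
Proof.
  intros Hab. rewrite <- (gmul1r G (ginv a)), <- Hab.
  now rewrite gmulA, gmulVl, gmul1l.
Qed.

Lemma ginvK (a : G) : ginv (ginv a) = a.
Proof. apply ginv_unique, gmulVl. Qed.

Lemma gmulVK (a b : G) : gmul (gmul a (ginv b)) b = a.
Proof. now rewrite <- gmulA, gmulVl, gmul1r. Qed.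

Lemma gpow_opp (s : G) (m : Z) : gpow s (- m) = ginv (gpow s m).
Proof.
  destruct m; simpl.
  - symmetry. apply ginv_unique, gmul1l.
  - reflexivity.
  - symmetry. apply ginvK.
Qed.

Lemma gpow_oppKl (s x : G) (m : Z) : gmul (gpow s (- m)) (gmul (gpow s m) x) = x.
Proof. now rewrite gmulA, gpow_opp, gmulVl, gmul1l. Qed.

Lemma rcoset_meet_iff (s t x y : G) :
  (exists g, rcoset s x g /\ rcoset t y g) <->
  (exists m n : Z, gmul x (ginv y) = gmul (gpow s m) (gpow t n)).
Proof.
  split.
  - intros [g [[m Hm] [n Hn]]].
    exists (- m)%Z, n.
    assert (Hx : x = gmul (gpow s (- m)) g) by now rewrite Hm, gpow_oppKl.
    now rewrite Hx, Hn, <- !gmulA, gmulVr, gmul1r.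
  - intros [m [n Hmn]].
    exists (gmul (gpow s (- m)) x). split.
    + now exists (- m)%Z.
    + exists n.
      rewrite <- (gmulVK x y), Hmn at 1.
      now rewrite <- gmulA, gpow_oppKl.
Qed.

Lemma Phi_complete_bipartite_iff (K : G -> Prop) (s t : G) :
  Phi_complete_bipartite K s t <->
  (forall x y, K x -> K y ->
     exists m n : Z, gmul x (ginv y) = gmul (gpow s m) (gpow t n)).
Proof.
  split.
  - intros Hc x y Hx Hy.
    destruct (Hc x y Hx Hy) as [g [_ [_ Hg]]].
    apply rcoset_meet_iff. now exists g.
  - intros Hst x y Hx Hy.
    destruct (proj2 (rcoset_meet_iff s t x y) (Hst x y Hx Hy)) as [g Hg].
    now exists g.
Qed.

End GroupFacts.

(* The hypothesis [s <> t] only makes Phi a genuine bipartite graph; the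
   equivalence does not need it. *)
Theorem proposition4 (G : Group) (s t : G) (hst : s <> t) :
  Phi_complete_bipartite (gen2 s t) s t <->
  (forall x : G, gen2 s t x ->
     exists m n : Z, x = gmul (gpow s m) (gpow t n)).
Proof.
  rewrite Phi_complete_bipartite_iff.
  split.
  - intros Hprod x Hx.
    replace x with (gmul x (ginv gone))
      by now rewrite (ginv_unique G gone gone (gmul1l G gone)), gmul1r.
    apply Hprod; [exact Hx | constructor].
  - intros Hprod x y Hx Hy.
    apply Hprod. apply gen2_mul; [exact Hx | now apply gen2_inv].
Qed.
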